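(* Let $n\geq 4$ be an integer and let $k\in\{2,3,\dots,\lfloor n/2\rfloor\}$. Then $$n\frac{\sin(\pi k/n)}{\sin(\pi/n)}>k(n-k)+1.$$ *)

From Stdlib Require Import Reals.

(* With x = PI/n, the ratio sin(kx)/sin(x) is at least sin(kx)/x, and the Taylor bound
   sin t >= t - t^3/6 at t = kx <= PI/2 gives n sin(kx)/sin(x) >= nk - k^3 PI^2/(6n)
   >= nk - k^2 PI^2/12, which beats k(n-k) + 1 as soon as k^2 (1 - PI^2/12) > 1; this
   holds for k >= 3 because PI^2 < 32/3.  For k = 2 the cubic bound is too weak, but
   there sin(2x)/sin(x) = 2 cos x >= 2 - x^2, and n x^2 = PI^2/n < 3. *)
From Stdlib Require Import Reals Arith.
From Stdlib Require Import Lra Lia Psatz.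
Open Scope R_scope.

Lemma PI_lt_3_26 : PI < 3.26.
Proof.
  destruct (PI_ineq 4) as [_ H].
  unfold sum_f_R0, tg_alt, PI_tg in H; simpl in H; lra.
Qed.

Lemma sin_ge_cubic (t : R) : 0 <= t <= 4 -> t - t ^ 3 / 6 <= sin t.
Proof.
  intros [t0 t4]; destruct (pre_sin_bound t 0 t0 t4) as [H _].
  unfold sin_approx, sin_term, sum_f_R0 in H; simpl in H; lra.
Qed.

Lemma cos_ge_quadratic (t : R) : -2 <= t <= 2 -> 1 - t ^ 2 / 2 <= cos t.
Proof.
  intros [t0 t2]; destruct (pre_cos_bound t 0 t0 t2) as [H _].
  unfold cos_approx, cos_term, sum_f_R0 in H; simpl in H; lra.
Qed.

Lemma sin2_div_sin_gt (N : R) : 4 <= N ->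
  N * (sin (2 * (PI / N)) / sin (PI / N)) > 2 * (N - 2) + 1.
Proof.
  intros HN; pose proof PI_lt_3_26; pose proof PI2_3_2.
  set (x := PI / N).
  assert (HxN : x * N = PI) by (unfold x; field; lra).
  assert (Hx0 : 0 < x) by (unfold x; apply Rdiv_lt_0_compat; lra).
  assert (Hx1 : x <= 1) by nra.
  assert (Hsx : 0 < sin x) by (apply sin_gt_0; lra).
  rewrite sin_2a.
  replace (2 * sin x * cos x / sin x) with (2 * cos x) by (field; lra).
  pose proof (cos_ge_quadratic x ltac:(lra)) as Hcos.
  assert (Hsmall : x * x * N < 3) by nra.
  nra.
Qed.

Lemma sin_mul_div_sin_gt (N K : R) : 3 <= K -> 2 * K <= N ->
  N * (sin (K * (PI / N)) / sin (PI / N)) > K * (N - K) + 1.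
Proof.
  intros HK HKN; pose proof PI_lt_3_26; pose proof PI2_3_2.
  set (x := PI / N); set (t := K * x).
  assert (HxN : x * N = PI) by (unfold x; field; lra).
  assert (Hx0 : 0 < x) by (unfold x; apply Rdiv_lt_0_compat; lra).
  assert (Ht0 : 0 < t) by (unfold t; nra).
  assert (Ht : t <= PI / 2) by (unfold t; nra).
  assert (Hsx : 0 < sin x) by (apply sin_gt_0; unfold t in Ht; nra).
  assert (Hsxx : sin x < x) by (apply sin_lt_x; lra).
  assert (Hst : 0 < sin t) by (apply sin_gt_0; lra).
  assert (Hratio : N * (sin t / x) <= N * (sin t / sin x)).
  { apply Rmult_le_compat_l; [lra |].
    apply Rmult_le_compat_l; [lra |]; apply Rinv_le_contravar; lra. }
  assert (Htaylor : N * ((t - t ^ 3 / 6) / x) <= N * (sin t / x)).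
  { apply Rmult_le_compat_l; [lra |].
    apply Rmult_le_compat_r; [left; apply Rinv_0_lt_compat; lra |].
    apply sin_ge_cubic; lra. }
  assert (Hexpand : N * ((t - t ^ 3 / 6) / x) = N * K - K ^ 3 * PI ^ 2 / (6 * N)).
  { rewrite <- HxN; unfold t; field; lra. }
  assert (Hhalf : K ^ 3 * PI ^ 2 / (6 * N) <= K ^ 2 * PI ^ 2 / 12).
  { apply Rmult_le_reg_r with (6 * N); [lra |].
    replace (K ^ 3 * PI ^ 2 / (6 * N) * (6 * N)) with (K ^ 3 * PI ^ 2) by (field; lra).
    assert (0 <= K ^ 2 * PI ^ 2) by nra.
    nra. }
  assert (HPI2 : PI ^ 2 < 32 / 3) by nra.
  assert (Hgap : K ^ 2 * (1 - PI ^ 2 / 12) > 1).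
  { assert (9 <= K ^ 2) by nra. nra. }
  lra.
Qed.

Theorem proposition5p2 (n k : nat) (hn : (4 <= n)%nat) (hk2 : (2 <= k)%nat)
  (hkn : (2 * k <= n)%nat) :
  INR n * (sin (PI * INR k / INR n) / sin (PI / INR n))
    > INR k * INR (n - k) + 1.
Proof.
  assert (HN : 4 <= INR n) by (replace 4 with (INR 4) by (simpl; lra); apply le_INR; lia).
  rewrite minus_INR by lia.
  replace (PI * INR k / INR n) with (INR k * (PI / INR n)) by (field; lra).
  destruct (Nat.eq_dec k 2) as [-> | Hk].
  - replace (INR 2) with 2 by (simpl; lra).
    now apply sin2_div_sin_gt.
  - apply sin_mul_div_sin_gt.
    + replace 3 with (INR 3) by (simpl; lra); apply le_INR; lia.
    + rewrite <- (mult_INR 2); apply le_INR; lia.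
Qed.
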